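(* Let $(X,\mathtt{d})$ be an instance of metric $k$-center clustering with $z$ outliers with optimal clusters $C_1,\dots,C_k$ and optimal radius $r_{\mathtt{opt}}$, and run Algorithm 1 (described in the context) with parameters $\epsilon>0$, $\eta\in(0,1/2)$, $t\in\mathbb{Z}^+$. Then in each round $j$ of the loop (Step 3), either the event $\mathtt{d}(Q_j,E)\leq 2r_{\mathtt{opt}}$ happens (with $E$ the current set before the round's sampling), or with probability at least $1-\eta$ the event $\lambda_j(E)\geq\lambda_{j-1}(E)+1$ happens.
   Context: Let $(X,\mathtt{d})$ be a finite metric space with $|X|=n$ and let $k,z$ be positive integers with $z<n$. The $k$-center clustering with $z$ outliers problem asks for $X'\subseteq X$ with $|X'|\geq n-z$ and centers $c_1,\dots,c_k\in X$ minimizing $\max_{p\in X'}\min_j\mathtt{d}(p,c_j)$; $r_{\mathtt{opt}}$ is the optimal value, $X_{\mathtt{opt}}$ a fixed optimal inlier set of size $n-z$, and $C_1,\dots,C_k$ the optimal clusters partitioning $X_{\mathtt{opt}}$, each contained in a ball of radius $r_{\mathtt{opt}}$ centered at a point of $X$. For sets $X_1,X_2\subseteq X$, $\mathtt{d}(X_1,X_2)=\min_{p\in X_1,q\in X_2}\mathtt{d}(p,q)$ and $\mathtt{d}(p,E)=\min_{q\in E}\mathtt{d}(p,q)$. Algorithm 1: Let $\gamma=z/n$, $E=\emptyset$. Set $j=1$ and add to $E$ $\frac{1}{1-\gamma}\log\frac1\eta$ vertices selected uniformly at random from $X$. Step 3: while $j<t$: set $j=j+1$; let $Q_j$ be the set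 of the $(1+\epsilon)z$ vertices of $X$ farthest from $E$; add to $E$ $\frac{1+\epsilon}{\epsilon}\log\frac1\eta$ vertices selected uniformly at random from $Q_j$. Output $E$. $\lambda_j(E)$ denotes the number of indices $l\in\{1,\dots,k\}$ with $C_l\cap E\neq\emptyset$ at the beginning of the $j$-th round of Step 3 (so $\lambda_j(E)$ vs. $\lambda_{j-1}(E)$ compares the counts after and before the sampling of round $j$). *)

From HB Require Import structures.
From mathcomp Require Import all_boot all_order all_algebra.
From mathcomp Require Import reals exp.
Set Implicit Arguments. Unset Strict Implicit. Unset Printing Implicit Defensive.
Import Order.TTheory GRing.Theory Num.Theory.
Local Open Scope ring_scope.

Section KCenter.
Variables (R : realType) (T : finType) (d : T -> T -> R).

Definition is_metric : Prop :=
  [/\ forall p q, 0 <= d p q,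
      forall p q, d p q = 0 <-> p = q,
      forall p q, d p q = d q p &
      forall p q r, d p r <= d p q + d q r].

(* d(p, E) = min_{q in E} d(p, q)  (E assumed nonempty; 0 if E is empty) *)
Definition dist_to (E : {set T}) (p : T) : R :=
  match [pick q in E] with
  | Some q0 => \big[Num.min/d p q0]_(q in E) d p q
  | None => 0
  end.

Definition setdist (A B : {set T}) : R :=
  match [pick pq in setX A B] with
  | Some pq0 => \big[Num.min/d pq0.1 pq0.2]_(pq in setX A B) d pq.1 pq.2
  | None => 0
  end.

(* the k-center-with-z-outliers objective of inliers Xp and centers c:
   max_{p in Xp} min_j d(p, c_j), written in unfolded form *)
Definition cost_le (k : nat) (Xp : {set T}) (c : 'I_k -> T) (r : R) : Prop :=
  forall p, p \in Xp -> exists j, d p (c j) <= r.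

Definition feasible (k z : nat) (Xp : {set T}) : Prop :=
  (#|T| - z <= #|Xp|)%N.

Definition is_opt_radius (k z : nat) (r : R) : Prop :=
  (exists (Xp : {set T}) (c : 'I_k -> T), feasible k z Xp /\ cost_le Xp c r) /\
  (forall (Xp : {set T}) (c : 'I_k -> T), feasible k z Xp ->
     exists p, p \in Xp /\ forall j, r <= d p (c j)).

Definition lambda (k : nat) (C : 'I_k -> {set T}) (E : {set T}) : nat :=
  #|[set l : 'I_k | C l :&: E != set0]|.

Definition sample_set (m : nat) (s : {ffun 'I_m -> T}) : {set T} :=
  [set s i | i : 'I_m].

(* probability, when sampling m points independently and uniformly at random
   (with replacement) from Q, that the event ev (on sample sequences) holds *)
Definition sample_prob (m : nat) (Q : {set T}) (ev : pred {ffun 'I_m -> T}) : R :=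
  #|[set s : {ffun 'I_m -> T} | [forall i, s i \in Q] && ev s]|%:R
  / (#|Q| ^ m)%:R.

End KCenter.

Definition round_samples (R : realType) (eps eta : R) : nat :=
  `|Num.ceil ((1 + eps) / eps * ln (1 / eta))|%N.

Definition Q_size (R : realType) (T : finType) (eps : R) (z : nat) : nat :=
  minn #|T| `|Num.ceil ((1 + eps) * z%:R)|%N.

From HB Require Import structures.
From mathcomp Require Import all_boot all_order all_algebra.
From mathcomp Require Import reals exp.
From mathcomp Require Import ring.
Set Implicit Arguments. Unset Strict Implicit. Unset Printing Implicit Defensive.
Import Order.TTheory GRing.Theory Num.Theory.
Local Open Scope ring_scope.

(* If some point of Q is within 2 r_opt of E we are in the first case.
   Otherwise no optimal cluster meeting Q can meet E, because clusters have
   diameter at most 2 r_opt; so a round fails to hit a new cluster only if all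
   m samples are among the at most z outliers of Q.  Since |Q| >= (1+eps) z,
   this happens with probability at most (1+eps)^-m, and the choice of m makes
   eta (1+eps)^m >= 1 through ln (1+eps) >= eps / (1+eps). *)

Lemma le_absz_ceil (R : realType) (x : R) : x <= `|Num.ceil x|%N%:R.
Proof. by rewrite natr_absz intr_norm (le_trans (ceil_ge x) (ler_norm _)). Qed.

Lemma ln1Dx_ge (R : realType) (x : R) : -1 < x -> x / (1 + x) <= ln (1 + x).
Proof.
move=> x_gtN1; have x1_gt0 : 0 < 1 + x by rewrite -ltrBlDl sub0r.
have := @le_ln1Dx R ((1 + x)^-1 - 1).
rewrite (addrC 1 (_ - 1)) subrK lnV ?posrE // ltrBrDr addrC subrr invr_gt0.
move=> /(_ x1_gt0).
suff -> : (1 + x)^-1 - 1 = - (x / (1 + x)) by rewrite lerN2.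
by field; rewrite gt_eqF.
Qed.

Lemma round_samples_ge (R : realType) (eps eta : R) :
  (1 + eps) / eps * ln (1 / eta) <= (round_samples eps eta)%:R.
Proof. exact: le_absz_ceil. Qed.

Lemma round_samples_enough (R : realType) (eps eta : R) :
  0 < eps -> 0 < eta -> 1 <= eta * (1 + eps) ^+ round_samples eps eta.
Proof.
move=> eps_gt0 eta_gt0; set m := round_samples eps eta.
have eps1_gt0 : 0 < 1 + eps by rewrite addr_gt0.
have ln_eta_le : ln (1 / eta) <= m%:R * ln (1 + eps).
  apply: le_trans (_ : m%:R * (eps / (1 + eps)) <= _); last first.
    by apply: ler_wpM2l => //; apply: ln1Dx_ge; rewrite (lt_trans (ltrN10 R)).
  have -> : ln (1 / eta) = (1 + eps) / eps * ln (1 / eta) * (eps / (1 + eps)).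
    by field; rewrite !gt_eqF.
  apply: ler_wpM2r; [by rewrite divr_ge0 ?ltW | exact: round_samples_ge].
rewrite -ler_ln ?posrE ?mulr_gt0 ?exprn_gt0 // ln1 lnM ?posrE ?exprn_gt0 //.
rewrite lnXn // -mulr_natl addrC -lerBlDr sub0r.
by rewrite div1r lnV ?posrE in ln_eta_le.
Qed.

Lemma expr_ratio_le (R : realFieldType) (eps eta b q : R) (m : nat) :
  0 <= eps -> 0 <= b -> 0 < q -> (1 + eps) * b <= q ->
  1 <= eta * (1 + eps) ^+ m -> (b / q) ^+ m <= eta.
Proof.
move=> eps_ge0 b_ge0 q_gt0 bq_le eta_ge.
have eps1_gt0 : 0 < 1 + eps by rewrite ltr_pwDl.
have ratio_le : b / q <= (1 + eps)^-1.
  by rewrite ler_pdivrMr // mulrC ler_pdivlMr // mulrC.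
apply: le_trans (_ : ((1 + eps)^-1) ^+ m <= _).
  apply: lerXn2r ratio_le; rewrite nnegrE; first exact: divr_ge0 b_ge0 (ltW q_gt0).
  by rewrite invr_ge0 ltW.
by rewrite exprVn -div1r ler_pdivrMr ?exprn_gt0.
Qed.

Section Sampling.
Variables (R : realType) (T : finType).

Lemma card_ffun_in (aT : finType) (Q : {set T}) :
  #|[set s : {ffun aT -> T} | [forall i, s i \in Q]]| = (#|Q| ^ #|aT|)%N.
Proof.
by rewrite -card_ffun_on; apply: eq_card => s; rewrite inE; apply/forallP/ffun_onP.
Qed.

Lemma sample_prob_ge (m : nat) (Q B : {set T}) (ev : pred {ffun 'I_m -> T}) :
  (0 < #|Q|)%N ->
  (forall s : {ffun 'I_m -> T},
     [forall i, s i \in Q] -> [exists i, s i \notin B] -> ev s) ->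
  1 - (#|B|%:R / #|Q|%:R) ^+ m <= @sample_prob R T m Q ev.
Proof.
move=> Q_gt0 hit_ev.
set A := [set s : {ffun 'I_m -> T} | [forall i, s i \in Q] && ev s].
have cover : (#|Q| ^ m <= #|A| + #|B| ^ m)%N.
  have card_in (P : {set T}) :
      #|[set s : {ffun 'I_m -> T} | [forall i, s i \in P]]| = (#|P| ^ m)%N.
    by rewrite card_ffun_in card_ord.
  rewrite -!card_in.
  apply: leq_trans (leq_card_setU _ _); apply: subset_leq_card.
  apply/subsetP => s; rewrite !inE => sQ; rewrite sQ /=; apply/orP.
  case: (boolP [forall i, s i \in B]) => [all_B | ]; first by right.
  by rewrite negb_forall => /(hit_ev s sQ); left.
have Qm_gt0 : 0 < (#|Q| ^ m)%:R :> R by rewrite ltr0n expn_gt0 Q_gt0.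
rewrite /sample_prob -/A ler_pdivlMr // expr_div_n -!natrX mulrBl mul1r.
by rewrite divfK ?gt_eqF // lerBlDr -natrD ler_nat.
Qed.

End Sampling.

Section Clusters.
Variables (R : realType) (T : finType) (d : T -> T -> R).

Lemma setdist_le (A B : {set T}) (p q : T) :
  p \in A -> q \in B -> setdist d A B <= d p q.
Proof.
move=> pA qB; have pq_in : (p, q) \in setX A B by rewrite inE pA qB.
rewrite /setdist; case: pickP => [pq0 _ | /(_ (p, q))]; last by rewrite pq_in.
by rewrite (bigD1 (p, q)) //= ge_min lexx.
Qed.

Hypothesis d_metric : is_metric d.

Lemma dist_le_through (c p q : T) (r : R) :
  d p c <= r -> d q c <= r -> d p q <= 2 * r.
Proof.
case: d_metric => _ _ d_sym d_tri pc_le qc_le.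
by apply: le_trans (d_tri p c q) _; rewrite mulr2n mulrDl mul1r lerD // d_sym.
Qed.

Lemma opt_radius_ge0 (k z : nat) (r : R) :
  (z < #|T|)%N -> is_opt_radius d k z r -> 0 <= r.
Proof.
move=> z_lt_n [[X [c [X_feas X_cost]]] _].
have : (0 < #|X|)%N by apply: leq_trans X_feas; rewrite subn_gt0.
rewrite card_gt0 => /set0Pn [p /X_cost [j pc_le]].
by case: d_metric => d_ge0 _ _ _; apply: le_trans (d_ge0 _ _) pc_le.
Qed.

Lemma far_cluster_disjoint (Cl E : {set T}) (c x : T) (r : R) :
  (forall p, p \in Cl -> d p c <= r) -> x \in Cl ->
  (forall e, e \in E -> 2 * r < d x e) -> Cl :&: E = set0.
Proof.
move=> Cl_ball xCl x_far; apply/setP => e; rewrite !inE.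
apply/negP => /andP [eCl eE]; have := x_far e eE.
by rewrite ltNge (dist_le_through (Cl_ball x xCl) (Cl_ball e eCl)).
Qed.

Lemma far_card_lt (Q E : {set T}) (r : R) :
  0 <= r -> E != set0 -> (forall p e, p \in Q -> e \in E -> 2 * r < d p e) ->
  (#|Q| < #|T|)%N.
Proof.
move=> r_ge0 /set0Pn [e eE] far; rewrite -cardsT proper_card //.
rewrite properT; apply/eqP => QT; have := far e e; rewrite QT inE => /(_ isT eE).
by case: d_metric => _ d_eq0 _ _; rewrite (proj2 (d_eq0 e e)) // ltNge mulr_ge0.
Qed.

End Clusters.

Lemma lambda_ltn (T : finType) (k : nat) (C : 'I_k -> {set T}) (E F : {set T})
    (l : 'I_k) (x : T) :
  E \subset F -> x \in C l -> x \in F -> C l :&: E = set0 ->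
  (lambda C E < lambda C F)%N.
Proof.
move=> EF xCl xF ClE0; apply: proper_card; apply/properP; split.
  apply/subsetP => l'; rewrite !inE => /set0Pn [y]; rewrite !inE => /andP [yCl yE].
  by apply/set0Pn; exists y; rewrite !inE yCl (subsetP EF).
by exists l; rewrite !inE ?ClE0 ?eqxx //; apply/set0Pn; exists x; rewrite !inE xCl.
Qed.

Lemma Q_size_ge (R : realType) (T : finType) (eps : R) (z : nat) :
  (Q_size T eps z < #|T|)%N -> (1 + eps) * z%:R <= (Q_size T eps z)%:R.
Proof.
by rewrite /Q_size /minn; case: ifP => _; rewrite ?ltnn // => _; apply: le_absz_ceil.
Qed.

Theorem lemma7 (R : realType) (T : finType) (d : T -> T -> R) (k z : nat)
    (ropt : R) (Xopt : {set T}) (C : 'I_k -> {set T}) (ctr : 'I_k -> T)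
    (eps eta : R) (E Q : {set T}) :
  is_metric d ->
  (0 < k)%N -> (0 < z)%N -> (z < #|T|)%N ->
  (* optimal value and a fixed optimal solution with clusters C_1..C_k *)
  is_opt_radius d k z ropt ->
  #|Xopt| = (#|T| - z)%N ->
  (forall p, p \in Xopt <-> exists l, p \in C l) ->
  (forall l l', l != l' -> [disjoint C l & C l']) ->
  (forall l p, p \in C l -> d p (ctr l) <= ropt) ->
  (* algorithm parameters *)
  0 < eps -> 0 < eta < 1 / 2 ->
  (* current set E at the beginning of a round of Step 3 (nonempty) *)
  E != set0 ->
  (* Q_j: the (1+eps)z vertices farthest from E *)
  #|Q| = Q_size T eps z ->
  (forall p p', p \in Q -> p' \notin Q -> dist_to d E p' <= dist_to d E p) ->
  setdist d Q E <= 2 * ropt \/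
  1 - eta <= @sample_prob R T (round_samples eps eta) Q
               (fun s => (lambda C E + 1 <= lambda C (E :|: sample_set s))%N).
Proof.
move=> d_metric _ z_gt0 z_lt_n opt card_Xopt Xopt_clusters _ C_radius eps_gt0
  /andP [eta_gt0 _] E_neq0 card_Q _.
have ropt_ge0 := opt_radius_ge0 d_metric z_lt_n opt.
have [|QE_far] := lerP (setdist d Q E) (2 * ropt); [by left | right].
have far p e : p \in Q -> e \in E -> 2 * ropt < d p e.
  by move=> pQ eE; apply: lt_le_trans QE_far (setdist_le d pQ eE).
have Q_big : (1 + eps) * z%:R <= #|Q|%:R.
  by rewrite card_Q Q_size_ge // -card_Q (far_card_lt d_metric ropt_ge0 E_neq0 far).
have outliers_le : (#|Q :\: Xopt| <= z)%N.
  rewrite (leq_trans (subset_leq_card (subsetDr Q Xopt))) //.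
  by rewrite cardsCs setCK card_Xopt subKn // ltnW.
have Q_gt0 : 0 < #|Q|%:R :> R.
  by apply: lt_le_trans Q_big; rewrite mulr_gt0 ?ltr0n ?addr_gt0.
apply: le_trans (sample_prob_ge _ (B := Q :\: Xopt) _ _); first 1 last.
- by rewrite -(ltr0n R).
- move=> s sQ /existsP [i]; rewrite inE (forallP sQ) andbT negbK => si_opt.
  have [l si_Cl] := (Xopt_clusters (s i)).1 si_opt.
  rewrite addn1; apply: (lambda_ltn (x := s i) (l := l)) => //.
  + exact: subsetUl.
  + by rewrite inE imset_f ?orbT.
  + apply: (far_cluster_disjoint d_metric (C_radius l) si_Cl) => e.
    exact: far (forallP sQ i).
rewrite lerD2l lerN2; apply: expr_ratio_le (round_samples_enough eps_gt0 eta_gt0).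
- exact: ltW.
- by [].
- exact: Q_gt0.
- apply: le_trans Q_big; apply: ler_wpM2l; first by rewrite addr_ge0 ?ltW.
  by rewrite ler_nat.
Qed.
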